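(* Let $q$ be a prime power, $1\le t\le s$, and $M$ an invertible $s\times s$ matrix over $\mathbb{F}_q$. Then $\mathbf{y}=\mathbf{x}M^{-1}$ defines a linear $(t,t,s,q)$-AONT if and only if every $(s-t)\times(s-t)$ submatrix of $M^{-1}$ is invertible.
   Context: For a bijection $\phi:\Gamma^s\to\Gamma^s$ over an alphabet $\Gamma$ of size $v$, its array representation is the $v^s\times 2s$ array having, for each $\mathbf{x}\in\Gamma^s$, a row $(\mathbf{x},\phi(\mathbf{x}))$. An $N\times k$ array is unbiased with respect to a set $D$ of columns if the rows restricted to $D$ contain every $|D|$-tuple over $\Gamma$ exactly $N/v^{|D|}$ times. $\phi$ is a $(t,t,s,v)$-AONT if its array representation (columns labelled $1,\dots,2s$) is unbiased with respect to $\{1,\dots,s\}$, $\{s+1,\dots,2s\}$, and $I\cup J$ for every $I\subseteq\{1,\dots,s\}$ with $|I|=t$ and every $J\subseteq\{s+1,\dots,2s\}$ with $|J|=s-t$. The map $\mathbf{x}\mapsto\mathbf{x}M^{-1}$ on row vectors of $\mathbb{F}_q^s$ is a linear $(t,t,s,q)$-AONT if it is a $(t,t,s,q)$-AONT over $\Gamma=\mathbb{F}_q$. (By convention a $0\times 0$ matrix is invertible.) *)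

From mathcomp Require Import all_boot all_order all_algebra all_fingroup all_field.
Set Implicit Arguments. Unset Strict Implicit. Unset Printing Implicit Defensive.
Import GRing.Theory.
Local Open Scope ring_scope.

(* An N x k array over alphabet T, given as a family of rows indexed by a
   finite type R (so N = #|R|); row r is a row vector 'rV[T]_k. *)
Definition unbiased (T R : finType) (k : nat) (A : R -> 'rV[T]_k)
  (D : {set 'I_k}) : Prop :=
  forall g : 'rV[T]_k,
    #|[set r : R | [forall j in D, A r 0 j == g 0 j]]| = (#|R| %/ #|T| ^ #|D|)%N.

(* Array representation of phi : Gamma^s -> Gamma^s : row (x, phi x) for each x;
   columns 1..s are lshift s i, columns s+1..2s are rshift s i. *)
Definition array_rep (T : finType) (s : nat) (phi : 'rV[T]_s -> 'rV[T]_s)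
  : 'rV[T]_s -> 'rV[T]_(s + s) :=
  fun x => row_mx x (phi x).

Definition left_cols (s : nat) (I : {set 'I_s}) : {set 'I_(s + s)} :=
  [set lshift s i | i in I].
Definition right_cols (s : nat) (J : {set 'I_s}) : {set 'I_(s + s)} :=
  [set rshift s j | j in J].

Definition is_AONT (T : finType) (t s : nat) (phi : 'rV[T]_s -> 'rV[T]_s) : Prop :=
  [/\ bijective phi,
      unbiased (array_rep phi) (left_cols [set: 'I_s]),
      unbiased (array_rep phi) (right_cols [set: 'I_s]) &
      forall I J : {set 'I_s}, #|I| = t -> #|J| = (s - t)%N ->
        unbiased (array_rep phi) (left_cols I :|: right_cols J)].

From mathcomp Require Import all_boot all_order all_algebra all_fingroup all_field.
Set Implicit Arguments. Unset Strict Implicit. Unset Printing Implicit Defensive.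
Import GRing.Theory.
Local Open Scope ring_scope.

(* An array with exactly v^|D| rows is unbiased on D iff its rows are
   determined by their entries in D.  For phi x = x N and D = I + J, by
   linearity this says that no nonzero z vanishing on I has z N vanishing on J.
   If f enumerates the complement of I and g enumerates J, such z are exactly
   the u (rowsub f 1) with u (mxsub f g N) = 0, so the condition for all I, J
   is the invertibility of every (s - t) x (s - t) submatrix of N. *)

Section UnbiasedArray.

Variables (T R : finType) (k : nat) (A : R -> 'rV[T]_k) (D : {set 'I_k}).

Let restr (u : 'rV[T]_k) : 'rV[T]_#|D| := \row_i u 0 (enum_val i).

Let restr_eqE u v : (restr u == restr v) = [forall j in D, u 0 j == v 0 j].
Proof.
apply/eqP/forall_inP => [eq_uv j Dj | eq_uv]; last first.
  by apply/rowP => i; rewrite !mxE; apply/eqP/eq_uv/enum_valP.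
have := congr1 (fun w : 'rV_#|D| => w 0 (enum_rank_in Dj j)) eq_uv.
by rewrite !mxE enum_rankK_in // => ->.
Qed.

Lemma unbiased_injP : (0 < #|T|)%N -> #|R| = (#|T| ^ #|D|)%N ->
  unbiased A D <-> (forall x y, {in D, forall j, A x 0 j = A y 0 j} -> x = y).
Proof.
move=> T_gt0 cardR; rewrite /unbiased cardR divnn expn_gt0 T_gt0.
have fiberE (g : 'rV_k) : [set r | [forall j in D, A r 0 j == g 0 j]] =
                [set r | restr (A r) == restr g].
  by apply/setP => r; rewrite !inE restr_eqE.
split => [fiber1 x y eq_xy | inj_A g].
  have /eqP/cards1P[z fiber_z] := fiber1 (A x).
  suff: (x \in [set z]) && (y \in [set z]) by rewrite !inE => /andP[/eqP-> /eqP->].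
  by rewrite -fiber_z !inE; apply/andP; split; apply/forall_inP => j Dj; rewrite ?eq_xy.
have restrA_inj : injective (restr \o A).
  move=> x y /eqP; rewrite restr_eqE => /forall_inP eq_xy.
  by apply: inj_A => j /eq_xy/eqP.
have [inv restrAK restrAVK] : bijective (restr \o A).
  by apply: inj_card_bij; rewrite // card_mx mul1n cardR.
apply/eqP/cards1P; exists (inv (restr g)); apply/setP => r.
by rewrite fiberE !inE -(inj_eq (can_inj restrAK)) restrAVK.
Qed.

End UnbiasedArray.

Lemma card_left_right_cols s (I J : {set 'I_s}) :
  #|left_cols I :|: right_cols J| = (#|I| + #|J|)%N.
Proof.
rewrite cardsU !card_imset; try exact: lshift_inj; try exact: rshift_inj.
suff -> : left_cols I :&: right_cols J = set0 by rewrite cards0 subn0.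
apply/setP => x; rewrite in_set0 in_setI; apply/negbTE/andP.
by case=> /imsetP[i _ ->] /imsetP[j _ /eqP]; rewrite eq_lrshift.
Qed.

Lemma array_rep_agree (T : finType) s (phi : 'rV[T]_s -> 'rV[T]_s)
    (I J : {set 'I_s}) x y :
  {in left_cols I :|: right_cols J, forall j, array_rep phi x 0 j = array_rep phi y 0 j}
  <-> {in I, forall i, x 0 i = y 0 i} /\ {in J, forall j, phi x 0 j = phi y 0 j}.
Proof.
split => [eq_xy | [eq_xy eq_phixy] j].
  split=> i Hi.
    have := eq_xy (lshift s i); rewrite /array_rep !row_mxEl.
    by apply; rewrite !inE imset_f.
  have := eq_xy (rshift s i); rewrite /array_rep !row_mxEr.
  by apply; rewrite !inE imset_f ?orbT.
by case/setUP => /imsetP[i Hi ->]; rewrite /array_rep ?row_mxEl ?row_mxEr; auto.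
Qed.

Lemma unbiased_mulmx_cols (F : finFieldType) s (N : 'M[F]_s) (I J : {set 'I_s}) :
  (#|I| + #|J|)%N = s ->
  unbiased (array_rep (mulmx^~ N)) (left_cols I :|: right_cols J) <->
  (forall z : 'rV_s, {in I, forall i, z 0 i = 0} ->
     {in J, forall j, (z *m N) 0 j = 0} -> z = 0).
Proof.
move=> cardIJ; have F_gt0 : (0 < #|F|)%N by apply/card_gt0P; exists 0.
have cardV : #|'rV[F]_s| = (#|F| ^ #|left_cols I :|: right_cols J|)%N.
  by rewrite card_mx mul1n card_left_right_cols cardIJ.
apply: (iff_trans (unbiased_injP _ F_gt0 cardV)).
split => [inj_rep z zI zJ | ker0 x y /array_rep_agree[eq_xy eq_xyN]].
  apply: inj_rep; apply/array_rep_agree.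
  by split => i Hi; [rewrite zI // mxE | rewrite zJ // mul0mx mxE].
apply/eqP; rewrite -subr_eq0; apply/eqP/ker0 => i Hi.
  by rewrite !mxE eq_xy ?subrr.
by have := eq_xyN i Hi; rewrite mulmxBl !mxE => ->; rewrite subrr.
Qed.

Lemma unbiased_mulmx_full_cols (F : finFieldType) s (N : 'M[F]_s) :
  N \in unitmx ->
  unbiased (array_rep (mulmx^~ N)) (left_cols [set: 'I_s]) /\
  unbiased (array_rep (mulmx^~ N)) (right_cols [set: 'I_s]).
Proof.
move=> N_unit; split.
  rewrite -[left_cols _]setU0 -(imset0 (@rshift s s)).
  apply/(unbiased_mulmx_cols N); first by rewrite cards0 cardsT card_ord addn0.
  by move=> z z0 _; apply/rowP => i; rewrite z0 ?mxE.
rewrite -[right_cols _]set0U -(imset0 (@lshift s s)).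
apply/(unbiased_mulmx_cols N); first by rewrite cards0 cardsT card_ord.
move=> z _ zN0; rewrite -(mulmxK N_unit z).
suff -> : z *m N = 0 by rewrite mul0mx.
by apply/rowP => j; rewrite zN0 ?mxE.
Qed.

Lemma exists_ord_enum (T : finType) n (A : {set T}) :
  #|A| = n -> exists2 f : 'I_n -> T, injective f & codom f =i A.
Proof.
move <-; exists (@enum_val _ (mem A)); first exact: enum_val_inj.
move=> x; apply/codomP/idP => [[i ->] | Ax]; first exact: enum_valP.
by exists (enum_rank_in Ax x); rewrite enum_rankK_in.
Qed.

Section SubmatrixKernel.

Variables (F : fieldType) (n s : nat) (f : 'I_n -> 'I_s).
Hypothesis f_inj : injective f.

Lemma mul_rowsub1_mxE (u : 'rV[F]_n) k :
  (u *m rowsub f 1%:M) 0 k = \sum_(i | f i == k) u 0 i.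
Proof.
by rewrite mxE [RHS]big_mkcond; apply: eq_bigr => i _; rewrite !mxE mulr_natr mulrb.
Qed.

Lemma mul_rowsub1_mx_codom (u : 'rV[F]_n) i : (u *m rowsub f 1%:M) 0 (f i) = u 0 i.
Proof.
by rewrite mul_rowsub1_mxE (big_pred1 i) // => i'; rewrite (inj_eq f_inj).
Qed.

Lemma mul_rowsub1_mx_notin_codom (u : 'rV[F]_n) k :
  k \notin codom f -> (u *m rowsub f 1%:M) 0 k = 0.
Proof.
move=> kNf; rewrite mul_rowsub1_mxE big_pred0 // => i.
by apply/negbTE; apply: contraNneq kNf => <-; apply: codom_f.
Qed.

Lemma rowsub1_supported (z : 'rV[F]_s) :
  (forall k, k \notin codom f -> z 0 k = 0) -> z = (\row_i z 0 (f i)) *m rowsub f 1%:M.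
Proof.
move=> z_supp; apply/rowP => k; have [/codomP[i ->] | kNf] := boolP (k \in codom f).
  by rewrite mul_rowsub1_mx_codom mxE.
by rewrite mul_rowsub1_mx_notin_codom ?z_supp.
Qed.

Lemma mul_mxsub (g : 'I_n -> 'I_s) (N : 'M[F]_s) (u : 'rV[F]_n) :
  u *m mxsub f g N = colsub g (u *m rowsub f 1%:M *m N).
Proof. by rewrite -[N in LHS]mul1mx [in LHS]mxsub_mul mulmxA mulmx_colsub. Qed.

Lemma mxsub_unitmxP (g : 'I_n -> 'I_s) (N : 'M[F]_s) (I J : {set 'I_s}) :
  codom f =i ~: I -> codom g =i J ->
  mxsub f g N \in unitmx <->
  (forall z : 'rV_s, {in I, forall i, z 0 i = 0} ->
     {in J, forall j, (z *m N) 0 j = 0} -> z = 0).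
Proof.
move=> codom_fE codom_gE.
have suppE (z : 'rV_s) : {in I, forall i, z 0 i = 0} <->
                         forall k, k \notin codom f -> z 0 k = 0.
  split => z_supp k; first by rewrite codom_fE inE negbK; apply: z_supp.
  by rewrite -[k \in I]negbK -in_setC -codom_fE; apply: z_supp.
have vanishE (w : 'rV_s) : {in J, forall j, w 0 j = 0} <-> colsub g w = 0.
  split => [w0 | /rowP w0 j].
    by apply/rowP => j; rewrite !mxE w0 // -codom_gE codom_f.
  by rewrite -codom_gE => /codomP[j' ->]; have := w0 j'; rewrite !mxE.
split => [N_unit z /suppE z_supp /vanishE zN0 | ker0].
  have z_eq := rowsub1_supported z_supp; set u := \row_i _ in z_eq.
  suff u0 : u = 0 by rewrite z_eq u0 mul0mx.
  by rewrite -(mulmxK N_unit u) mul_mxsub -z_eq zN0 mul0mx.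
rewrite unitmxE unitfE; apply/negP => /det0P[u /negP u_neq0 uN0]; apply: u_neq0.
have /rowP z0 : u *m rowsub f 1%:M = 0.
  apply: ker0; first by apply/suppE => k kNf; rewrite mul_rowsub1_mx_notin_codom.
  by apply/vanishE; rewrite -mul_mxsub.
by apply/eqP/rowP => i; rewrite -mul_rowsub1_mx_codom z0 !mxE.
Qed.

End SubmatrixKernel.

Theorem mainTheorem6 (F : finFieldType) (s t : nat) (M : 'M[F]_s) :
  (1 <= t <= s)%N -> M \in unitmx ->
  (is_AONT t (fun x : 'rV[F]_s => x *m invmx M) <->
   forall (f g : 'I_(s - t) -> 'I_s), injective f -> injective g ->
     mxsub f g (invmx M) \in unitmx).
Proof.
move=> /andP[_ t_le_s] M_unit; set N := invmx M.
have cardIJ (I J : {set 'I_s}) : #|I| = t -> #|J| = (s - t)%N -> (#|I| + #|J|)%N = s.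
  by move=> -> ->; rewrite subnKC.
split => [[_ _ _ unbiasedIJ] f g f_inj g_inj | minors_unit].
  pose I := ~: [set k in codom f]; pose J := [set k in codom g].
  have cardI : #|I| = t.
    by rewrite cardsCs setCK cardsE card_codom // !card_ord subKn.
  have cardJ : #|J| = (s - t)%N by rewrite cardsE card_codom // card_ord.
  apply/(mxsub_unitmxP f_inj N (I := I) (J := J)) => [k | k |]; rewrite ?setCK ?inE //.
  by apply/unbiased_mulmx_cols; [apply: cardIJ | apply: unbiasedIJ].
have N_unit : N \in unitmx by rewrite unitmx_inv.
have [unbiasedL unbiasedR] := unbiased_mulmx_full_cols N_unit.
split=> // [|I J cardI cardJ].
  by exists (mulmx^~ M) => x; rewrite /N (mulmxKV, mulmxK).
apply/unbiased_mulmx_cols; first exact: cardIJ.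
have [f f_inj codom_fE] : exists2 f : 'I_(s - t) -> 'I_s, injective f & codom f =i ~: I.
  by apply: exists_ord_enum; rewrite cardsCs setCK cardI card_ord.
have [g g_inj codom_gE] := exists_ord_enum cardJ.
by apply/(mxsub_unitmxP f_inj N codom_fE codom_gE); apply: minors_unit.
Qed.
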